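(* Let $(X,T)$ be a minimal topological dynamical system. Then $(X,T)$ is strongly $\mathcal{F}_{ip}$-sensitive if and only if there is $\delta>0$ such that for every non-empty open subset $U$ of $X$ there are $x\in U$ and $y\in X$ with $d(x,y)>\delta$ and $x$ strongly proximal to $y$.
   Context: A topological dynamical system: compact metric space $(X,d)$ with continuous surjection $T$; minimal means every orbit is dense. $x$ is strongly proximal to $y$ if $(y,y)$ belongs to the $\omega$-limit set of $(x,y)$ under $T\times T$, i.e. there are $n_k\to\infty$ with $T^{n_k}x\to y$ and $T^{n_k}y\to y$. $\mathcal{F}_{ip}$ is the family of subsets of $\mathbb{Z}_+$ containing some $FS((p_i)_{i=1}^\infty)=\{\sum_{i\in\alpha}p_i:\alpha$ finite nonempty$\}$, $p_i\in\mathbb{N}$. $(X,T)$ is strongly $\mathcal{F}_{ip}$-sensitive if there is $\delta>0$ such that for each nonempty open $U$ there are $x,y\in U$ with $\{n\in\mathbb{Z}_+:d(T^nx,T^ny)>\delta\}\in\mathcal{F}_{ip}$. *)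

From Stdlib Require Import Reals List.
Open Scope R_scope.
Set Implicit Arguments.

Section Dyn.
Variable X : Type.
Variable d : X -> X -> R.

Definition is_metric : Prop :=
  (forall x y, d x y = 0 <-> x = y) /\
  (forall x y, d x y = d y x) /\
  (forall x y z, d x z <= d x y + d y z).

Definition d_open (U : X -> Prop) : Prop :=
  forall x, U x -> exists e, 0 < e /\ forall y, d x y < e -> U y.

Definition d_compact : Prop :=
  forall (I : Type) (F : I -> X -> Prop),
    (forall i, d_open (F i)) -> (forall x, exists i, F i x) ->
    exists l : list I, forall x, exists i, In i l /\ F i x.

Definition d_continuous (T : X -> X) : Prop :=
  forall x e, 0 < e -> exists del, 0 < del /\
    forall y, d x y < del -> d (T x) (T y) < e.

Definition surjective (T : X -> X) : Prop := forall y, exists x, T x = y.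

Definition iterT (T : X -> X) (n : nat) (x : X) : X := Nat.iter n T x.

Definition d_dense (A : X -> Prop) : Prop :=
  forall U, d_open U -> (exists u, U u) -> exists a, A a /\ U a.

Definition minimal (T : X -> X) : Prop :=
  forall x, d_dense (fun z => exists n, z = iterT T n x).

Definition TDS (T : X -> X) : Prop :=
  is_metric /\ d_compact /\ d_continuous T /\ surjective T.

Definition seq_converges (u : nat -> X) (l : X) : Prop :=
  forall e, 0 < e -> exists k0, forall k, (k0 <= k)%nat -> d (u k) l < e.

Definition strongly_proximal (T : X -> X) (x y : X) : Prop :=
  exists nk : nat -> nat,
    (forall K, exists k0, forall k, (k0 <= k)%nat -> (K <= nk k)%nat) /\
    seq_converges (fun k => iterT T (nk k) x) y /\
    seq_converges (fun k => iterT T (nk k) y) y.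


End Dyn.

(* finite sums FS((p_i)) : sums over finite nonempty index sets alpha,
   represented as duplicate-free nonempty lists *)
Definition FS (p : nat -> nat) (n : nat) : Prop :=
  exists alpha : list nat, alpha <> nil /\ NoDup alpha /\
    n = fold_right (fun i s => (p i + s)%nat) 0%nat alpha.

Definition F_ip (A : nat -> Prop) : Prop :=
  exists p : nat -> nat, (forall i, (1 <= p i)%nat) /\
    forall n, FS p n -> A n.

Definition strongly_Fip_sensitive (X : Type) (d : X -> X -> R) (T : X -> X) : Prop :=
  exists delta, 0 < delta /\
    forall U : X -> Prop, d_open d U -> (exists u, U u) ->
      exists x y, U x /\ U y /\
        F_ip (fun n => d (iterT T n x) (iterT T n y) > delta).

(* If x and y are close and d(T^n x, T^n y) > delta along an IP set, Ellis' lemma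
   applied to the closed subsemigroup of betaN cut out by the tails of that IP set
   gives an idempotent ultrafilter u containing it. The u-limits x', y' of T^n x
   and T^n y are delta apart, and idempotence (u + u = u) makes x' a u-limit of
   T^n x' as well, so x is strongly proximal to x' and y to y'. Since d(x, y) is
   small, one of d(x, x'), d(y, y') exceeds delta/4.

   Conversely, if x is strongly proximal to y, the times n at which T^n x and
   T^n y are both near y can be chosen to extend any finitely many earlier such
   times (continuity of finitely many iterates at y), which builds an IP set of
   them directly. By minimality some b = T^m y lies in U near x, and along that
   IP set T^n x stays near y and T^n b near b, so T^n x and T^n b stay more than
   delta/2 apart. *)

From Stdlib Require Import Reals Lra Lia List Classical IndefiniteDescription
  FunctionalExtensionality PropExtensionality.
From mathcomp Require classical_sets filter.
Import ListNotations.
Set Implicit Arguments.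
Unset Strict Implicit.

Local Open Scope nat_scope.

Local Notation set_system := ((nat -> Prop) -> Prop).

(** * IP sets from extendable sets *)

Definition fsum (p : nat -> nat) (alpha : list nat) : nat :=
  fold_right (fun i s => p i + s) 0 alpha.

Lemma fsum_app p a b : fsum p (a ++ b) = fsum p a + fsum p b.
Proof. induction a as [|i a IH]; simpl; [|rewrite IH]; lia. Qed.

Lemma fsum_pos (p : nat -> nat) alpha : (forall i, 1 <= p i) -> alpha <> [] -> 1 <= fsum p alpha.
Proof. intros hp hne. destruct alpha as [|i al]; [congruence|]. simpl. specialize (hp i). lia. Qed.

Lemma list_nat_bounded (alpha : list nat) : exists K, forall i, In i alpha -> i < K.
Proof.
induction alpha as [|a al [K hK]]; [exists 0; intros _ []|].
exists (S (Nat.max a K)). intros i [<-|hi]; [|specialize (hK i hi)]; lia.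
Qed.

(* [s = 0] stands for the empty sum. *)
Definition sum_extendable (B : nat -> Prop) : Prop :=
  forall L : list nat, (forall s, In s L -> s = 0 \/ B s) ->
    exists n, 1 <= n /\ forall s, In s L -> B (s + n).

Section GeneratorsFromExtension.

Variable B : nat -> Prop.
Variable next : list nat -> nat.
Hypothesis next_spec : forall L, (forall s, In s L -> s = 0 \/ B s) ->
  1 <= next L /\ forall s, In s L -> B (s + next L).

(* [partial_sums k] lists, with repetitions, all finite sums of
   [generator 0], ..., [generator (k-1)], the empty one included. *)
Fixpoint partial_sums (k : nat) : list nat :=
  match k with
  | 0 => [0]
  | S k => partial_sums k ++ map (fun s => s + next (partial_sums k)) (partial_sums k)
  end.

Definition generator (k : nat) : nat := next (partial_sums k).

Lemma partial_sums_in k s : In s (partial_sums k) -> s = 0 \/ B s.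
Proof.
revert s. induction k as [|k IH]; simpl; intros s hs.
- destruct hs as [<-|[]]; auto.
- apply in_app_or in hs. destruct hs as [hs|hs]; auto.
  apply in_map_iff in hs. destruct hs as [s' [<- hs']].
  right. apply (next_spec IH). exact hs'.
Qed.

Lemma generator_pos k : 1 <= generator k.
Proof. exact (proj1 (next_spec (partial_sums_in (k := k)))). Qed.

Lemma fsum_in_partial_sums k alpha : NoDup alpha -> (forall i, In i alpha -> i < k) ->
  In (fsum generator alpha) (partial_sums k).
Proof.
revert alpha. induction k as [|k IH]; intros alpha hN hlt.
- destruct alpha as [|a al]; [simpl; auto|]. specialize (hlt a (or_introl eq_refl)). lia.
- simpl. apply in_or_app. destruct (in_dec Nat.eq_dec k alpha) as [hk|hk].
  + right. destruct (in_split _ _ hk) as [l1 [l2 ->]].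
    destruct (NoDup_remove _ _ _ hN) as [hN' hk'].
    rewrite fsum_app. simpl. apply in_map_iff.
    exists (fsum generator (l1 ++ l2)). split; [rewrite fsum_app; unfold generator; lia|].
    apply IH; [exact hN'|]. intros i hi.
    assert (i <> k) by (intros ->; contradiction).
    assert (i < S k) by (apply hlt; apply in_app_or in hi; apply in_or_app; simpl; tauto).
    lia.
  + left. apply IH; [exact hN|]. intros i hi.
    assert (i <> k) by (intros ->; contradiction). specialize (hlt i hi). lia.
Qed.

Lemma fsum_generator_in alpha : alpha <> [] -> NoDup alpha -> B (fsum generator alpha).
Proof.
intros hne hN. destruct (list_nat_bounded alpha) as [K hK].
assert (hin : In (fsum generator alpha) (partial_sums K)) by (apply fsum_in_partial_sums; assumption).
destruct (partial_sums_in hin) as [h0|h]; [|exact h].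
pose proof (fsum_pos generator_pos hne). lia.
Qed.

End GeneratorsFromExtension.

Lemma Fip_of_sum_extendable B : sum_extendable B -> F_ip B.
Proof.
intros hB.
destruct (functional_choice (fun L n => (forall s, In s L -> s = 0 \/ B s) ->
  1 <= n /\ forall s, In s L -> B (s + n))) as [next next_spec].
{ intros L. destruct (classic (forall s, In s L -> s = 0 \/ B s)) as [hL|hL].
  - destruct (hB L hL) as [n hn]. exists n. auto.
  - exists 0. intro; contradiction. }
exists (generator next). split; [exact (generator_pos next_spec)|].
intros n [alpha [hne [hN ->]]]. exact (fsum_generator_in next_spec hne hN).
Qed.

(** * Ultrafilters on nat *)

Record is_uf (p : set_system) : Prop := {
  uf_top : p (fun _ => True);
  uf_nonempty : forall A, p A -> exists n, A n;
  uf_and : forall A B, p A -> p B -> p (fun n => A n /\ B n);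
  uf_mono : forall A B, (forall n, A n -> B n) -> p A -> p B;
  uf_or_not : forall A, p A \/ p (fun n => ~ A n) }.

(* An ultrafilter is modelled by its set of members. [uf_add] is the semigroup
   operation of betaN: A is in p + q iff {n | A - n is in q} is in p. *)
Definition uf_shift (q : set_system) (A : nat -> Prop) : nat -> Prop :=
  fun n => q (fun m => A (n + m)).

Definition uf_add (p q : set_system) : set_system :=
  fun A => p (uf_shift q A).

Definition nonprincipal (p : set_system) : Prop := forall k, p (fun n => k <= n).

Definition uf_over (F : set_system) (p : set_system) : Prop :=
  is_uf p /\ forall A, F A -> p A.

Definition meet (L : list (nat -> Prop)) (n : nat) : Prop := forall B, In B L -> B n.

Definition fip (F : set_system) : Prop :=
  forall L, (forall B, In B L -> F B) -> exists n, meet L n.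

Lemma uf_all p A : is_uf p -> (forall n, A n) -> p A.
Proof. intros hp hA. exact (uf_mono hp (fun n _ => hA n) (uf_top hp)). Qed.

Lemma uf_meet p L : is_uf p -> (forall B, In B L -> p B) -> p (meet L).
Proof.
intros hp. induction L as [|A L IH]; intros hL.
- apply uf_all; [exact hp|]. intros n B [].
- apply (uf_mono hp (A := fun n => A n /\ meet L n)).
  + intros n [h1 h2] B [<-|hB]; [exact h1|exact (h2 B hB)].
  + apply (uf_and hp); [apply hL; left; reflexivity|].
    apply IH. intros B hB. apply hL. right. exact hB.
Qed.

Lemma uf_ext p q : is_uf p -> is_uf q -> (forall A, p A -> q A) -> p = q.
Proof.
intros hp hq hpq. extensionality A. apply propositional_extensionality.
split; [apply hpq|]. intros qA.
destruct (uf_or_not hp A) as [h|h]; [exact h|].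
destruct (uf_nonempty hq (uf_and hq qA (hpq _ h))) as [n [h1 h2]]. contradiction.
Qed.

Lemma is_uf_add p q : is_uf p -> is_uf q -> is_uf (uf_add p q).
Proof.
intros hp hq. constructor; unfold uf_add, uf_shift.
- apply uf_all; [exact hp|]. intros n. apply uf_top, hq.
- intros A hA. destruct (uf_nonempty hp hA) as [n hn].
  destruct (uf_nonempty hq hn) as [m hm]. eauto.
- intros A B hA hB. apply (uf_mono hp (fun n h => uf_and hq (proj1 h) (proj2 h))).
  exact (uf_and hp hA hB).
- intros A B hAB. apply (uf_mono hp). intros n. apply (uf_mono hq). intros m. apply hAB.
- intros A. destruct (uf_or_not hp (uf_shift q A)) as [h|h]; [left; exact h|].
  right. refine (uf_mono hp _ h). intros n hn.
  destruct (uf_or_not hq (fun m => A (n + m))) as [h'|h']; [contradiction|exact h'].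
Qed.

Lemma uf_add_assoc p q r : uf_add (uf_add p q) r = uf_add p (uf_add q r).
Proof.
unfold uf_add, uf_shift. extensionality A. f_equal. extensionality a. f_equal. extensionality b.
f_equal. extensionality c. rewrite Nat.add_assoc. reflexivity.
Qed.

Lemma uf_over_mono F G p : (forall A, F A -> G A) -> uf_over G p -> uf_over F p.
Proof. intros hFG [hp hG]. split; auto. Qed.

Lemma ultrafilter_exists F : fip F -> exists p, uf_over F p.
Proof.
intros hF.
set (D := fun L => forall B, In B L -> F B).
assert (hfilter : filter.Filter (filter.filter_from D meet)).
{ apply filter.filter_from_filter.
  - exists []. intros _ [].
  - intros L1 L2 h1 h2. exists (L1 ++ L2).
    + intros B hB. apply in_app_or in hB. destruct hB; auto.
    + intros n hn. split; intros B hB; apply hn; apply in_or_app; auto. }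
destruct (filter.ultraFilterLemma
  (filter.filter_from_proper hfilter (fun L hL => hF L hL))) as [p [hu hsub]].
exists p. split.
- pose proof (@filter.ultra_proper _ _ hu) as hpr.
  pose proof (@filter.filter_filter _ _ hpr) as hfil.
  constructor.
  + exact (@filter.filterT _ _ hfil).
  + intros A hA. apply NNPP. intros hne. apply (filter.filter_not_empty p).
    replace classical_sets.set0 with A; [exact hA|].
    extensionality n. apply propositional_extensionality. split; [|intros []].
    intros hn. apply hne. exists n. exact hn.
  + intros A B hA hB. exact (filter.filterI hA hB).
  + intros A B hAB hA. exact (filter.filterS hAB hA).
  + intros A. exact (filter.in_ultra_setVsetC A hu).
- intros A hA. apply hsub. exists [A].
  + intros B [<-|[]]. exact hA.
  + intros n hn. apply hn. left. reflexivity.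
Qed.

(** * Idempotent ultrafilters *)

(* A family F stands for the closed set of ultrafilters containing it, so a
   maximal semigroup family is a minimal closed subsemigroup of betaN. *)
Definition semigroup_family (F : set_system) : Prop :=
  (exists p, uf_over F p) /\
  forall p q, uf_over F p -> uf_over F q -> uf_over F (uf_add p q).

Definition maximal_semigroup_family (M : set_system) : Prop :=
  semigroup_family M /\
  forall M', (forall A, M A -> M' A) -> semigroup_family M' -> forall A, M' A -> M A.

Lemma semigroup_family_ext F G :
  (forall A, F A -> G A) -> (forall A, G A -> F A) -> semigroup_family F -> semigroup_family G.
Proof.
intros hFG hGF [[p hp] hcl]. split.
- exists p. exact (uf_over_mono hGF hp).
- intros q r hq hr. apply (uf_over_mono hGF), hcl; apply (uf_over_mono hFG); assumption.
Qed.

Lemma chain_list_bound (Fam : set_system -> Prop) F0 L :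
  (forall G1 G2, Fam G1 -> Fam G2 -> (forall A, G1 A -> G2 A) \/ (forall A, G2 A -> G1 A)) ->
  (forall B, In B L -> (exists2 G, Fam G & G B) \/ F0 B) ->
  (forall B, In B L -> F0 B) \/ exists2 G, Fam G & forall B, In B L -> G B \/ F0 B.
Proof.
intros htot. induction L as [|C L IH]; intros hL; [left; intros _ []|].
destruct IH as [IH|[G hG IH]]; [intros B hB; apply hL; right; exact hB| |].
- destruct (hL C (or_introl eq_refl)) as [[G hG hC]|hC].
  + right. exists G; [exact hG|]. intros B [<-|hB]; [left|right; apply IH]; assumption.
  + left. intros B [<-|hB]; [|apply IH]; assumption.
- right. destruct (hL C (or_introl eq_refl)) as [[G' hG' hC]|hC].
  + destruct (htot G G' hG hG') as [sub|sub].
    * exists G'; [exact hG'|]. intros B [<-|hB]; [left; exact hC|].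
      destruct (IH B hB); [left; apply sub|right]; assumption.
    * exists G; [exact hG|]. intros B [<-|hB]; [left; apply sub; exact hC|apply IH; exact hB].
  + exists G; [exact hG|]. intros B [<-|hB]; [right; exact hC|apply IH; exact hB].
Qed.

Lemma semigroup_family_chain_union (Fam : set_system -> Prop) F0 :
  semigroup_family F0 ->
  (forall G1 G2, Fam G1 -> Fam G2 -> (forall A, G1 A -> G2 A) \/ (forall A, G2 A -> G1 A)) ->
  (forall G, Fam G -> semigroup_family (fun A => G A \/ F0 A)) ->
  semigroup_family (fun A => (exists2 G, Fam G & G A) \/ F0 A).
Proof.
intros [[p0 hp0] hcl0] htot hFam. split.
- apply ultrafilter_exists. intros L hL.
  destruct (chain_list_bound htot hL) as [hF0|[G hG hLG]].
  + exact (uf_nonempty (proj1 hp0) (uf_meet (proj1 hp0) (fun B hB => proj2 hp0 B (hF0 B hB)))).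
  + destruct (proj1 (hFam G hG)) as [r [hr hrG]].
    exact (uf_nonempty hr (uf_meet hr (fun B hB => hrG B (hLG B hB)))).
- intros p q hp hq. split; [exact (is_uf_add (proj1 hp) (proj1 hq))|].
  intros A [[G hG hA]|hA].
  + assert (hsub : forall B, G B \/ F0 B -> (exists2 G, Fam G & G B) \/ F0 B)
      by (intros B [hB|hB]; [left; exists G|right]; assumption).
    apply (proj2 (hFam G hG) p q (uf_over_mono hsub hp) (uf_over_mono hsub hq)). left. exact hA.
  + assert (hsub : forall B, F0 B -> (exists2 G, Fam G & G B) \/ F0 B) by (intros; right; assumption).
    exact (proj2 (hcl0 p q (uf_over_mono hsub hp) (uf_over_mono hsub hq)) A hA).
Qed.

Lemma maximal_semigroup_family_exists F0 : semigroup_family F0 ->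
  exists M, (forall A, F0 A -> M A) /\ maximal_semigroup_family M.
Proof.
intros hF0.
destruct (@classical_sets.Zorn_bigcup (nat -> Prop)
  (fun G => semigroup_family (fun A => G A \/ F0 A))) as [G [hG hmax]].
{ intros Fam hFam htot. exact (semigroup_family_chain_union hF0 htot hFam). }
exists (fun A => G A \/ F0 A). split; [intros A hA; right; exact hA|]. split; [exact hG|].
intros M' hM' hsg A hA. left. apply NNPP. intros hnA.
apply (hmax M').
- split; [intros B hB; apply hM'; left; exact hB|].
  intros hM'G. exact (hnA (hM'G A hA)).
- apply (semigroup_family_ext (F := M')); [intros B hB; left; exact hB|
    |exact hsg].
  intros B [hB|hB]; [exact hB|apply hM'; right; exact hB].
Qed.

Lemma uf_shift_list_bound p e M L : is_uf p -> is_uf e ->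
  (forall B, In B L -> M B \/ exists2 A, p A & B = uf_shift e A) ->
  exists2 As, p As & forall B, In B L -> M B \/ forall n, uf_shift e As n -> B n.
Proof.
intros hp he. induction L as [|B0 L IH]; intros hL.
- exists (fun _ => True); [exact (uf_top hp)|]. intros _ [].
- destruct IH as [As hAs hL']; [intros B hB; apply hL; right; exact hB|].
  destruct (hL B0 (or_introl eq_refl)) as [hB0|[A hA ->]].
  + exists As; [exact hAs|]. intros B [<-|hB]; [left; exact hB0|exact (hL' B hB)].
  + exists (fun n => As n /\ A n); [exact (uf_and hp hAs hA)|].
    intros B [<-|hB].
    * right. intros n hn. exact (uf_mono he (fun m h => proj2 h) hn).
    * destruct (hL' B hB) as [hMB|hsub]; [left; exact hMB|right].
      intros n hn. apply hsub. exact (uf_mono he (fun m h => proj1 h) hn).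
Qed.

(* The right translate {t + e | t contains M} is closed. *)
Lemma uf_over_right_translates M e p : is_uf e ->
  uf_over (fun A => forall t, uf_over M t -> uf_add t e A) p ->
  exists t, uf_over M t /\ p = uf_add t e.
Proof.
intros he [hp hpG].
destruct (@ultrafilter_exists (fun B => M B \/ exists2 A, p A & B = uf_shift e A))
  as [t [ht htH]].
- intros L hL. destruct (uf_shift_list_bound hp he hL) as [As hAs hLAs].
  assert (ht0 : exists t, uf_over M t /\ t (uf_shift e As)).
  { apply NNPP. intros hnot.
    assert (hnAs : p (fun n => ~ As n)).
    { apply hpG. intros t ht. unfold uf_add.
      destruct (uf_or_not (proj1 ht) (uf_shift e As)) as [h|h]; [exfalso; eauto|].
      refine (uf_mono (proj1 ht) _ h). intros n hn.
      destruct (uf_or_not he (fun m => As (n + m))) as [h'|h']; [contradiction|exact h']. }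
    destruct (uf_nonempty hp (uf_and hp hAs hnAs)) as [n [h1 h2]]. contradiction. }
  destruct ht0 as [t [[ht htM] htAs]].
  apply (uf_nonempty ht). apply (uf_meet ht). intros B hB.
  destruct (hLAs B hB) as [hMB|hsub]; [exact (htM B hMB)|exact (uf_mono ht hsub htAs)].
- exists t. split; [split; [exact ht|intros A hA; apply htH; left; exact hA]|].
  apply uf_ext; [exact hp|exact (is_uf_add ht he)|].
  intros A hA. apply htH. right. exists A; [exact hA|reflexivity].
Qed.

Section MaximalSemigroupFamily.

Variable M : set_system.
Hypothesis hM : maximal_semigroup_family M.

(* M + e is a closed subsemigroup of the minimal M, hence all of M, and e lies in it. *)
Lemma maximal_left_unit e : uf_over M e -> exists t, uf_over M t /\ uf_add t e = e.
Proof.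
intros he. destruct hM as [[_ hcl] hmax].
set (G := fun A => forall t, uf_over M t -> uf_add t e A).
assert (hMG : forall A, M A -> G A).
{ intros A hA t ht. exact (proj2 (hcl t e ht he) A hA). }
assert (hsg : semigroup_family G).
{ split.
  - exists (uf_add e e). split; [exact (is_uf_add (proj1 he) (proj1 he))|].
    intros A hA. exact (hA e he).
  - intros p q hp hq.
    destruct (uf_over_right_translates (proj1 he) hp) as [t [ht ->]].
    destruct (uf_over_right_translates (proj1 he) hq) as [s [hs ->]].
    rewrite <- uf_add_assoc.
    split; [exact (is_uf_add (proj1 (hcl _ _ (hcl _ _ ht he) hs)) (proj1 he))|].
    intros A hA. exact (hA _ (hcl _ _ (hcl _ _ ht he) hs)). }
assert (heG : uf_over G e) by exact (uf_over_mono (hmax G hMG hsg) he).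
destruct (uf_over_right_translates (proj1 he) heG) as [t [ht hte]].
exists t. split; [exact ht|symmetry; exact hte].
Qed.

(* {s in M | s + e = e} is a nonempty closed subsemigroup of M, hence contains e. *)
Lemma maximal_idempotent e t : uf_over M e -> uf_over M t -> uf_add t e = e -> uf_add e e = e.
Proof.
intros he ht hte. destruct hM as [[_ hcl] hmax].
set (G := fun A => forall s, uf_over M s -> uf_add s e = e -> s A).
assert (hMG : forall A, M A -> G A) by (intros A hA s hs _; exact (proj2 hs A hA)).
assert (hunit : forall p, uf_over G p -> uf_over M p /\ uf_add p e = e).
{ intros p hp. split; [exact (uf_over_mono hMG hp)|].
  symmetry. apply uf_ext; [exact (proj1 he)|exact (is_uf_add (proj1 hp) (proj1 he))|].
  intros A hA. apply (proj2 hp). intros s hs hse.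
  change (uf_add s e A). rewrite hse. exact hA. }
assert (hsg : semigroup_family G).
{ split.
  - exists t. split; [exact (proj1 ht)|]. intros A hA. exact (hA t ht hte).
  - intros p q hp hq.
    destruct (hunit p hp) as [hpM hpe]. destruct (hunit q hq) as [hqM hqe].
    assert (hpqe : uf_add (uf_add p q) e = e) by (rewrite uf_add_assoc, hqe; exact hpe).
    split; [exact (proj1 (hcl _ _ hpM hqM))|].
    intros A hA. exact (hA _ (hcl _ _ hpM hqM) hpqe). }
exact (proj2 (hunit e (uf_over_mono (hmax G hMG hsg) he))).
Qed.

End MaximalSemigroupFamily.

Lemma idempotent_ultrafilter_exists F0 : semigroup_family F0 ->
  exists u, uf_over F0 u /\ uf_add u u = u.
Proof.
intros hF0.
destruct (maximal_semigroup_family_exists hF0) as [M [hF0M hM]].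
destruct (proj1 (proj1 hM)) as [e he].
destruct (maximal_left_unit hM he) as [t [ht hte]].
exists e. split; [exact (uf_over_mono hF0M he)|exact (maximal_idempotent hM he ht hte)].
Qed.

Definition FS_from (p : nat -> nat) (m n : nat) : Prop :=
  exists alpha, alpha <> [] /\ NoDup alpha /\ (forall i, In i alpha -> m <= i) /\ n = fsum p alpha.

Lemma fsum_length p alpha : (forall i, 1 <= p i) -> length alpha <= fsum p alpha.
Proof. intros hp. induction alpha as [|i al IH]; simpl; [|specialize (hp i)]; lia. Qed.

Lemma FS_from_mono p m m' n : m <= m' -> FS_from p m' n -> FS_from p m n.
Proof.
intros hm [al [hne [hN [hge ->]]]]. exists al. repeat split; auto.
intros i hi. specialize (hge i hi). lia.
Qed.

Lemma FS_from_shift p m n : FS_from p m n -> exists m', forall j, FS_from p m' j -> FS_from p m (n + j).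
Proof.
intros [al [hne [hN [hge ->]]]]. destruct (list_nat_bounded al) as [K hK].
exists (K + m). intros j [be [hne' [hN' [hge' ->]]]]. exists (al ++ be).
split; [destruct al; simpl; congruence|split; [|split]].
- apply NoDup_app; auto. intros a ha hb. specialize (hK a ha). specialize (hge' a hb). lia.
- intros i hi. apply in_app_or in hi. destruct hi as [hi|hi]; [auto|specialize (hge' i hi); lia].
- symmetry. apply fsum_app.
Qed.

Lemma FS_from_large p m k : (forall i, 1 <= p i) -> exists n, FS_from p m n /\ k <= n.
Proof.
intros hp. exists (fsum p (seq m (S k))). split.
- exists (seq m (S k)). repeat split; [simpl; congruence|apply seq_NoDup|].
  intros i hi. apply in_seq in hi. lia.
- pose proof (fsum_length (seq m (S k)) hp) as hlen. rewrite length_seq in hlen. lia.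
Qed.

Definition FS_tails (p : nat -> nat) (A : nat -> Prop) : Prop :=
  exists m k, forall n, FS_from p m n -> k <= n -> A n.

Lemma FS_tails_fip p : (forall i, 1 <= p i) -> fip (FS_tails p).
Proof.
intros hp L hL.
assert (hbound : exists m k, forall B, In B L -> forall n, FS_from p m n -> k <= n -> B n).
{ clear hp. induction L as [|B0 L IH].
  - exists 0, 0. intros B [].
  - destruct IH as [m [k IH]]; [intros B hB; apply hL; right; exact hB|].
    destruct (hL B0 (or_introl eq_refl)) as [m0 [k0 h0]].
    exists (Nat.max m m0), (Nat.max k k0). intros B [<-|hB] n hn hk.
    + apply h0; [apply (FS_from_mono (m' := Nat.max m m0))|]; auto; lia.
    + apply (IH B hB); [apply (FS_from_mono (m' := Nat.max m m0))|]; auto; lia. }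
destruct hbound as [m [k hbound]]. destruct (FS_from_large m k hp) as [n [hn hk]].
exists n. intros B hB. exact (hbound B hB n hn hk).
Qed.

Lemma FS_tails_semigroup p : (forall i, 1 <= p i) -> semigroup_family (FS_tails p).
Proof.
intros hp. split; [exact (ultrafilter_exists (FS_tails_fip hp))|].
intros q r [hq hqF] [hr hrF]. split; [exact (is_uf_add hq hr)|].
intros A [m [k hA]].
refine (uf_mono hq _ (hqF _ (ex_intro _ m (ex_intro _ 0 (fun n h _ => h))))).
intros n hn. destruct (FS_from_shift hn) as [m' hm'].
apply (hrF _). exists m', k. intros j hj hk. apply hA; [exact (hm' j hj)|lia].
Qed.

Lemma Fip_idempotent A : F_ip A ->
  exists u, is_uf u /\ nonprincipal u /\ uf_add u u = u /\ u A.
Proof.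
intros [p [hp hA]].
destruct (idempotent_ultrafilter_exists (FS_tails_semigroup hp)) as [u [[hu huF] hidem]].
exists u. split; [exact hu|split; [|split; [exact hidem|]]].
- intros k. apply huF. exists 0, k. intros n _ hk. exact hk.
- apply huF. exists 0, 0. intros n [al [hne [hN [_ ->]]]] _. apply hA. exists al. auto.
Qed.

(** * Orbits and limits along ultrafilters *)

Local Open Scope R_scope.

Section Metric.

Variable X : Type.
Variable d : X -> X -> R.
Hypothesis hm : is_metric d.

Lemma metric_self x : d x x = 0.
Proof. apply (proj1 hm). reflexivity. Qed.

Lemma metric_sym x y : d x y = d y x.
Proof. apply (proj1 (proj2 hm)). Qed.

Lemma metric_triangle x y z : d x z <= d x y + d y z.
Proof. apply (proj2 (proj2 hm)). Qed.

Lemma metric_ge0 x y : 0 <= d x y.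
Proof.
pose proof (metric_triangle x y x) as htri. rewrite metric_self, (metric_sym y x) in htri. lra.
Qed.

Lemma ball_open c r : d_open d (fun y => d c y < r).
Proof.
intros x hx. exists (r - d c x). split; [lra|].
intros y hy. pose proof (metric_triangle c x y) as htri. lra.
Qed.

Lemma seq_converges_near (u : nat -> X) l c e : seq_converges d u l -> d l c < e ->
  exists k0, forall k, (k0 <= k)%nat -> d (u k) c < e.
Proof.
intros hu hl. destruct (hu (e - d l c)) as [k0 hk0]; [lra|].
exists k0. intros k hk. specialize (hk0 k hk).
pose proof (metric_triangle (u k) l c) as htri. lra.
Qed.

End Metric.

Arguments ball_open {X d} hm c r.

Lemma iterT_add X (T : X -> X) n m x : iterT T (n + m) x = iterT T n (iterT T m x).
Proof. apply Nat.iter_add. Qed.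

Lemma iterT_comm X (T : X -> X) n m x : iterT T n (iterT T m x) = iterT T m (iterT T n x).
Proof. rewrite <- !iterT_add, Nat.add_comm. reflexivity. Qed.

Lemma iterT_continuous X (d : X -> X -> R) T n : d_continuous d T -> d_continuous d (iterT T n).
Proof.
intros hT. induction n as [|n IH]; intros x e he; [exists e; split; auto|].
destruct (hT (iterT T n x) e he) as [e1 [he1 h1]].
destruct (IH x e1 he1) as [e2 [he2 h2]].
exists e2. split; [exact he2|]. intros y hy. exact (h1 _ (h2 y hy)).
Qed.

Lemma seq_converges_continuous X (d : X -> X -> R) (f : X -> X) u l :
  is_metric d -> d_continuous d f -> seq_converges d u l -> seq_converges d (fun k => f (u k)) (f l).
Proof.
intros hm hf hu e he. destruct (hf l e he) as [eta [heta hc]].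
destruct (hu eta heta) as [k0 hk0]. exists k0. intros k hk.
rewrite (metric_sym hm). apply hc. rewrite (metric_sym hm). exact (hk0 k hk).
Qed.

Lemma inv_INR_S_small e : 0 < e -> exists k0, forall k, (k0 <= k)%nat -> / INR (S k) < e.
Proof.
intros he. destruct (archimed_cor1 e he) as [N [hN hN0]]. exists N. intros k hk.
apply Rle_lt_trans with (/ INR N); [|exact hN].
apply Rinv_le_contravar; [apply lt_0_INR; exact hN0|apply le_INR; lia].
Qed.

Section UltrafilterLimits.

Variable X : Type.
Variable d : X -> X -> R.
Variable T : X -> X.
Hypothesis hm : is_metric d.
Hypothesis hT : d_continuous d T.

Definition uf_lim (p : set_system) (x z : X) : Prop :=
  forall e, 0 < e -> p (fun n => d (iterT T n x) z < e).

Lemma uf_lim_exists p x : d_compact d -> is_uf p -> exists z, uf_lim p x z.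
Proof.
intros hc hp. apply NNPP. intros hnone.
set (I := {ze : X * R | 0 < snd ze /\ ~ p (fun n => d (iterT T n x) (fst ze) < snd ze)}).
set (ball := fun (i : I) y => d (fst (proj1_sig i)) y < snd (proj1_sig i)).
destruct (hc I ball) as [l hl].
- intros i. apply ball_open, hm.
- intros y. apply not_ex_all_not with (n := y) in hnone.
  apply not_all_ex_not in hnone. destruct hnone as [e hy].
  apply imply_to_and in hy. destruct hy as [he hy].
  exists (exist _ (y, e) (conj he hy)). unfold ball. simpl. rewrite (metric_self hm). exact he.
- assert (hout : forall i : I, p (fun n => ~ ball i (iterT T n x))).
  { intros [[z e] [he hz]]. unfold ball. simpl.
    destruct (uf_or_not hp (fun n => d (iterT T n x) z < e)) as [h|h]; [contradiction|].
    refine (uf_mono hp _ h). intros n hn. rewrite (metric_sym hm). exact hn. }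
  set (L := map (fun i n => ~ ball i (iterT T n x)) l).
  assert (hL : p (meet L)).
  { apply (uf_meet hp). intros B hB. apply in_map_iff in hB. destruct hB as [i [<- _]]. exact (hout i). }
  destruct (uf_nonempty hp hL) as [n hn]. destruct (hl (iterT T n x)) as [i [hi hball]].
  apply (hn (fun n => ~ ball i (iterT T n x))); [apply in_map_iff; exists i; auto|exact hball].
Qed.

Lemma uf_lim_unique p x z z' : is_uf p -> uf_lim p x z -> uf_lim p x z' -> z = z'.
Proof.
intros hp hz hz'. apply (proj1 hm). apply NNPP. intros hne.
assert (hpos : 0 < d z z' / 2).
{ destruct (metric_ge0 hm z z') as [h|h]; [lra|]. symmetry in h. contradiction. }
destruct (uf_nonempty hp (uf_and hp (hz _ hpos) (hz' _ hpos))) as [n [h1 h2]].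
pose proof (metric_triangle hm z (iterT T n x) z') as htri.
rewrite (metric_sym hm z (iterT T n x)) in htri. lra.
Qed.

Lemma uf_lim_add p q x z w : is_uf p -> is_uf q ->
  uf_lim q x z -> uf_lim p z w -> uf_lim (uf_add p q) x w.
Proof.
intros hp hq hxz hzw e he. assert (he2 : 0 < e / 2) by lra.
refine (uf_mono hp _ (hzw _ he2)). intros n hn. simpl in hn.
destruct (iterT_continuous n hT z he2) as [eta [heta hc]].
refine (uf_mono hq _ (hxz _ heta)). intros m hm'. simpl in hm'.
rewrite iterT_add. rewrite (metric_sym hm) in hm'.
pose proof (hc _ hm') as hnear. rewrite (metric_sym hm) in hnear.
pose proof (metric_triangle hm (iterT T n (iterT T m x)) (iterT T n z) w) as htri. lra.
Qed.

Lemma uf_lim_idempotent_recurrent u z w : d_compact d -> is_uf u -> uf_add u u = u ->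
  uf_lim u z w -> uf_lim u w w.
Proof.
intros hc hu hidem hzw. destruct (uf_lim_exists w hc hu) as [w' hww'].
replace w with w' at 2; [exact hww'|].
apply (uf_lim_unique (x := z) hu); [|exact hzw].
rewrite <- hidem. exact (uf_lim_add hu hu hzw hww').
Qed.

Lemma strongly_proximal_of_uf_lim u z w : is_uf u -> nonprincipal u ->
  uf_lim u z w -> uf_lim u w w -> strongly_proximal d T z w.
Proof.
intros hu hnp hzw hww.
destruct (functional_choice (fun k n => (k <= n)%nat /\
  d (iterT T n z) w < / INR (S k) /\ d (iterT T n w) w < / INR (S k))) as [nk hnk].
{ intros k. assert (hk : 0 < / INR (S k)) by (apply Rinv_0_lt_compat, lt_0_INR; lia).
  apply (uf_nonempty hu). apply (uf_and hu (hnp k)). exact (uf_and hu (hzw _ hk) (hww _ hk)). }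
exists nk. split; [|split].
- intros K. exists K. intros k hk. pose proof (proj1 (hnk k)). lia.
- intros e he. destruct (inv_INR_S_small he) as [k0 hk0]. exists k0. intros k hk.
  pose proof (hk0 k hk). pose proof (proj1 (proj2 (hnk k))). lra.
- intros e he. destruct (inv_INR_S_small he) as [k0 hk0]. exists k0. intros k hk.
  pose proof (hk0 k hk). pose proof (proj2 (proj2 (hnk k))). lra.
Qed.

Lemma Fip_separated_strongly_proximal x y delta : d_compact d ->
  F_ip (fun n => d (iterT T n x) (iterT T n y) > delta) ->
  exists x' y', strongly_proximal d T x x' /\ strongly_proximal d T y y' /\ delta <= d x' y'.
Proof.
intros hc hA. destruct (Fip_idempotent hA) as [u [hu [hnp [hidem huA]]]].
destruct (uf_lim_exists x hc hu) as [x' hx']. destruct (uf_lim_exists y hc hu) as [y' hy'].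
exists x', y'. split; [|split].
- exact (strongly_proximal_of_uf_lim hu hnp hx' (uf_lim_idempotent_recurrent hc hu hidem hx')).
- exact (strongly_proximal_of_uf_lim hu hnp hy' (uf_lim_idempotent_recurrent hc hu hidem hy')).
- apply Rnot_lt_le. intros hlt. assert (he : 0 < (delta - d x' y') / 2) by lra.
  destruct (uf_nonempty hu (uf_and hu huA (uf_and hu (hx' _ he) (hy' _ he)))) as [n [h1 [h2 h3]]].
  pose proof (metric_triangle hm (iterT T n x) x' (iterT T n y)) as htri1.
  pose proof (metric_triangle hm x' y' (iterT T n y)) as htri2.
  rewrite (metric_sym hm y') in htri2. lra.
Qed.

End UltrafilterLimits.

Lemma eventually_forall_in (A : Type) (P : A -> nat -> Prop) (L : list A) :
  (forall s, In s L -> exists k0, forall k, (k0 <= k)%nat -> P s k) ->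
  exists k0, forall k, (k0 <= k)%nat -> forall s, In s L -> P s k.
Proof.
induction L as [|s L IH]; intros hL; [exists 0%nat; intros k _ _ []|].
destruct IH as [k1 h1]; [intros s' hs'; apply hL; right; exact hs'|].
destruct (hL s (or_introl eq_refl)) as [k2 h2].
exists (Nat.max k1 k2). intros k hk s' [<-|hs']; [apply h2|apply h1]; lia || assumption.
Qed.

Lemma Fip_mono (A B : nat -> Prop) : F_ip A -> (forall n, A n -> B n) -> F_ip B.
Proof. intros [p [hp hA]] hAB. exists p. split; [exact hp|]. intros n hn. exact (hAB n (hA n hn)). Qed.

Lemma d_open_and X (d : X -> X -> R) (U V : X -> Prop) :
  d_open d U -> d_open d V -> d_open d (fun z => U z /\ V z).
Proof.
intros hU hV z [hz1 hz2]. destruct (hU z hz1) as [e1 [he1 g1]]. destruct (hV z hz2) as [e2 [he2 g2]].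
exists (Rmin e1 e2). split; [apply Rmin_glb_lt; assumption|].
pose proof (Rmin_l e1 e2) as h1. pose proof (Rmin_r e1 e2) as h2.
intros w hw. split; [apply g1|apply g2]; lra.
Qed.

Section Dynamics.

Variable X : Type.
Variable d : X -> X -> R.
Variable T : X -> X.
Hypothesis hm : is_metric d.
Hypothesis hT : d_continuous d T.

Lemma strongly_proximal_sum_extendable x y e : strongly_proximal d T x y -> 0 < e ->
  sum_extendable (fun n => d (iterT T n x) y < e /\ d (iterT T n y) y < e).
Proof.
intros [nk [hinf [hx hy]]] he L hL.
assert (hev : forall s, In s L -> exists k0, forall k, (k0 <= k)%nat ->
  d (iterT T (s + nk k) x) y < e /\ d (iterT T (s + nk k) y) y < e).
{ intros s hs.
  assert (hsy : d (iterT T s y) y < e).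
  { destruct (hL s hs) as [->|[_ h]]; [simpl; rewrite (metric_self hm); exact he|exact h]. }
  destruct (seq_converges_near hm (seq_converges_continuous hm (iterT_continuous s hT) hx) hsy)
    as [k1 h1].
  destruct (seq_converges_near hm (seq_converges_continuous hm (iterT_continuous s hT) hy) hsy)
    as [k2 h2].
  exists (Nat.max k1 k2). intros k hk. rewrite !iterT_add.
  split; [apply h1|apply h2]; lia. }
destruct (eventually_forall_in hev) as [k0 hk0]. destruct (hinf 1%nat) as [k1 hk1].
exists (nk (Nat.max k0 k1)). split; [apply hk1; lia|].
intros s hs. apply (hk0 (Nat.max k0 k1)); [lia|exact hs].
Qed.

Lemma strongly_Fip_sensitive_of_proximal_pairs delta : minimal d T -> 0 < delta ->
  (forall U : X -> Prop, d_open d U -> (exists u, U u) ->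
    exists x y, U x /\ d x y > delta /\ strongly_proximal d T x y) ->
  strongly_Fip_sensitive d T.
Proof.
intros hmin hdelta hP. exists (delta / 2). split; [lra|].
intros U hU hne. destruct (hP U hU hne) as [x [y [hx [hxy hsp]]]].
set (eps := delta / 8). assert (heps : 0 < eps) by (unfold eps; lra).
destruct (hmin y (fun z => U z /\ d x z < eps)) as [b [[m ->] [hb hxb]]].
{ exact (d_open_and hU (ball_open hm x eps)). }
{ exists x. split; [exact hx|rewrite (metric_self hm); exact heps]. }
destruct (iterT_continuous m hT y heps) as [eta [heta hcont]].
set (e := Rmin eps eta).
assert (he : 0 < e) by (apply Rmin_glb_lt; assumption).
exists x, (iterT T m y). split; [exact hx|split; [exact hb|]].
apply (Fip_mono (Fip_of_sum_extendable (strongly_proximal_sum_extendable hsp he))).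
intros n [hnx hny].
pose proof (Rmin_l eps eta) as heeps. pose proof (Rmin_r eps eta) as heeta. fold e in heeps, heeta.
set (b := iterT T m y) in *.
assert (hbn : d b (iterT T n b) < eps).
{ unfold b. rewrite iterT_comm. apply hcont. rewrite (metric_sym hm). lra. }
pose proof (metric_triangle hm x b y) as h1.
pose proof (metric_triangle hm b (iterT T n b) y) as h2.
pose proof (metric_triangle hm (iterT T n b) (iterT T n x) y) as h3.
rewrite (metric_sym hm (iterT T n b) (iterT T n x)) in h3.
unfold eps in *. lra.
Qed.

Lemma proximal_pairs_of_strongly_Fip_sensitive : d_compact d -> strongly_Fip_sensitive d T ->
  exists delta, 0 < delta /\
    forall U : X -> Prop, d_open d U -> (exists u, U u) ->
      exists x y, U x /\ d x y > delta /\ strongly_proximal d T x y.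
Proof.
intros hc [delta [hdelta hS]]. exists (delta / 4). split; [lra|].
intros U hU [u0 hu0]. destruct (hU u0 hu0) as [eps [heps hball]].
set (r := Rmin eps (delta / 8)).
assert (hr : 0 < r) by (apply Rmin_glb_lt; lra).
pose proof (Rmin_l eps (delta / 8)) as hreps. pose proof (Rmin_r eps (delta / 8)) as hrdelta.
fold r in hreps, hrdelta.
destruct (hS (fun z => d u0 z < r) (ball_open hm u0 r)) as [x [y [hx [hy hA]]]].
{ exists u0. rewrite (metric_self hm). exact hr. }
destruct (Fip_separated_strongly_proximal hm hT hc hA) as [x' [y' [hxx' [hyy' hx'y']]]].
pose proof (metric_triangle hm x u0 y) as hxy. rewrite (metric_sym hm x u0) in hxy.
pose proof (metric_triangle hm x' x y') as htri1. pose proof (metric_triangle hm x y y') as htri2.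
rewrite (metric_sym hm x' x) in htri1.
destruct (Rlt_le_dec (delta / 4) (d x x')) as [hfar|hnear].
- exists x, x'. split; [apply hball; lra|split; [lra|exact hxx']].
- exists y, y'. split; [apply hball; lra|split; [lra|exact hyy']].
Qed.

End Dynamics.

Theorem proposition4p15 (X : Type) (d : X -> X -> R) (T : X -> X)
  (hTDS : TDS d T) (hmin : minimal d T) :
  strongly_Fip_sensitive d T <->
  exists delta, 0 < delta /\
    forall U : X -> Prop, d_open d U -> (exists u, U u) ->
      exists x y, U x /\ d x y > delta /\ strongly_proximal d T x y.
Proof.
destruct hTDS as [hm [hc [hT _]]]. split.
- exact (proximal_pairs_of_strongly_Fip_sensitive hm hT hc).
- intros [delta [hdelta hP]].
  exact (strongly_Fip_sensitive_of_proximal_pairs hm hT hmin hdelta hP).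
Qed.
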